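(* Let $f$ and $g$ be arithmetic functions with $f$ multiplicative, and let $n$ be a positive integer such that $(\mathrm{Id}*f)(p^{\alpha})\neq 0$ for every prime power $p^{\alpha}\| n$. Then $$(f*\Phi_g)(n)=(\mathrm{Id}*f)(n)\sum_{p^{\alpha}\| n}\frac{(f*\Phi_g)(p^{\alpha})}{(\mathrm{Id}*f)(p^{\alpha})}.$$
   Context: $\mathbb{N}$ denotes the positive integers; $p^{\alpha}\|n$ means $p$ prime, $p^\alpha\mid n$, $p^{\alpha+1}\nmid n$, and sums over $p^\alpha\|n$ run over the prime-power factors of $n$. $\mathrm{Id}(n)=n$. Dirichlet convolution: $(u*v)(n)=\sum_{d\mid n}u(d)v(n/d)$. $f$ is multiplicative if $f(mn)=f(m)f(n)$ for coprime $m,n$. The additive transform of an arithmetic function $g$ is the function $\Phi_g:\mathbb{N}\to\mathbb{C}$ with $\Phi_g(p^{\alpha})=g(p^{\alpha})$ for every prime $p$ and $\alpha\ge1$, and $\Phi_g(nm)=n\Phi_g(m)+m\Phi_g(n)$ for coprime $m,n$; equivalently $\Phi_g(n)=n\sum_{p^{\alpha}\| n} g(p^{\alpha})/p^{\alpha}$. *)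

(* Arithmetic functions are maps nat -> C, only their values
   at positive integers matter.  C is the complex numbers R[i] over R : realType. *)
From mathcomp Require Import all_boot all_algebra.
From mathcomp Require Export complex reals.
Set Implicit Arguments. Unset Strict Implicit. Unset Printing Implicit Defensive.
Import GRing.Theory Num.Theory.
Local Open Scope ring_scope.

Section ArithFun.
Variable C : fieldType.

Definition dconv (u v : nat -> C) (n : nat) : C :=
  \sum_(d <- divisors n) u d * v (n %/ d)%N.

Definition Idf (n : nat) : C := n%:R.

Definition arith_multiplicative (f : nat -> C) : Prop :=
  forall m n : nat, (0 < m)%N -> (0 < n)%N -> coprime m n -> f (m * n)%N = f m * f n.

Definition Phi (g : nat -> C) (n : nat) : C :=
  n%:R * \sum_(p <- primes n) g (p ^ logn p n)%N / (p ^ logn p n)%:R.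
End ArithFun.

(* Convolving with a multiplicative f turns a coprime Leibniz rule
   A(mk) = A(m) B(k) + B(m) A(k), with B multiplicative, into the same rule for
   (f*A, f*B).  The additive transform satisfies it with B = Id, so A = f*Phi_g
   and B = f*Id = Id*f do too.  Whenever B is invertible on the prime powers of
   n, the rule says that A/B is additive over the prime-power factorisation of n. *)
From mathcomp Require Import all_boot all_algebra.
From mathcomp Require Import complex reals.
From mathcomp Require Import ring.
Import GRing.Theory Num.Theory.
Local Open Scope ring_scope.
Local Open Scope complex_scope.
Set Implicit Arguments. Unset Strict Implicit.

Lemma divisors_gt0 n d : (0 < n)%N -> d \in divisors n -> (0 < d)%N.
Proof. by move=> n0; rewrite -dvdn_divisors // => /(dvdn_gt0 n0). Qed.

Lemma divn_divisors_gt0 n d : (0 < n)%N -> d \in divisors n -> (0 < n %/ d)%N.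
Proof.
move=> n0 dn; rewrite divn_gt0 ?(divisors_gt0 n0 dn) // dvdn_leq //.
by rewrite dvdn_divisors.
Qed.

Lemma perm_divisorsM m k : (0 < m)%N -> (0 < k)%N -> coprime m k ->
  perm_eq (divisors (m * k)) [seq (d1 * d2)%N | d1 <- divisors m, d2 <- divisors k].
Proof.
move=> m0 k0 cmk; have mk0 : (0 < m * k)%N by rewrite muln_gt0 m0.
apply: uniq_perm; rewrite ?divisors_uniq //.
  apply: allpairs_uniq; rewrite ?divisors_uniq //.
  move=> _ _ /allpairsP[[a b] /= [am bk ->]] /allpairsP[[c e] /= [cm ek ->]] /= eq_ab_ce.
  move: am bk cm ek; rewrite -!dvdn_divisors // => am bk cm ek.
  have cmb := coprime_dvdr bk cmk; have cme := coprime_dvdr ek cmk.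
  have cka : coprime k a by rewrite coprime_sym (coprime_dvdl am).
  have ckc : coprime k c by rewrite coprime_sym (coprime_dvdl cm).
  have -> : a = c.
    by rewrite -(gcdn_idPr am) -(gcdn_idPr cm) -(Gauss_gcdl a cmb) eq_ab_ce Gauss_gcdl.
  suff -> : b = e by [].
  by rewrite -(gcdn_idPr bk) -(gcdn_idPr ek) -(Gauss_gcdr b cka) eq_ab_ce Gauss_gcdr.
move=> d; rewrite -dvdn_divisors //; apply/idP/allpairsP => [dmk | ].
  exists (gcdn d m, gcdn d k); rewrite /= -!dvdn_divisors // !dvdn_gcdr.
  split=> //; apply/eqP; rewrite eqn_dvd Gauss_dvd ?dvdn_gcdl //; last first.
    exact: coprime_dvdl (dvdn_gcdr _ _) (coprime_dvdr (dvdn_gcdr _ _) cmk).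
  by rewrite muln_gcdl !muln_gcdr !dvdn_gcd dmk !(dvdn_mulr _ (dvdnn d)) dvdn_mull.
move=> [[a b] /= [am bk ->]]; move: am bk.
by rewrite -!dvdn_divisors // => am bk; apply: dvdn_mul.
Qed.

Lemma perm_divisors_div n :
  (0 < n)%N -> perm_eq (divisors n) [seq (n %/ d)%N | d <- divisors n].
Proof.
move=> n0; have divnK' d : d \in divisors n -> (n %/ (n %/ d))%N = d.
  by rewrite -dvdn_divisors // => dn; rewrite divnA // mulKn // (dvdn_gt0 n0).
apply: uniq_perm; rewrite ?divisors_uniq //.
  rewrite (map_inj_in_uniq _) ?divisors_uniq // => a b an bn eq_ab.
  by rewrite -(divnK' a an) eq_ab divnK'.
move=> d; apply/idP/mapP => [dn | [e en ->]].
  by exists (n %/ d)%N; rewrite ?divnK' // -dvdn_divisors // dvdn_div ?dvdn_divisors.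
by rewrite -dvdn_divisors // dvdn_div // dvdn_divisors.
Qed.

Lemma coprime_divisors m k d1 d2 : (0 < m)%N -> (0 < k)%N -> coprime m k ->
  d1 \in divisors m -> d2 \in divisors k -> coprime d1 d2.
Proof.
move=> m0 k0 cmk; rewrite -!dvdn_divisors // => d1m d2k.
exact: coprime_dvdl d1m (coprime_dvdr d2k cmk).
Qed.

Lemma coprime_divisors_div m k d1 d2 : (0 < m)%N -> (0 < k)%N -> coprime m k ->
  d1 \in divisors m -> d2 \in divisors k -> coprime (m %/ d1) (k %/ d2).
Proof.
move=> m0 k0 cmk; rewrite -!dvdn_divisors // => d1m d2k.
exact: coprime_dvdl (dvdn_div d1m) (coprime_dvdr (dvdn_div d2k) cmk).
Qed.

Lemma lognM_coprime p m k : (0 < m)%N -> (0 < k)%N -> coprime m k ->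
  p \in primes m -> logn p (m * k) = logn p m.
Proof.
move=> m0 k0 cmk; rewrite mem_primes => /and3P[_ _ pm].
by rewrite lognM // (logn_coprime (coprime_dvdl pm cmk)) addn0.
Qed.

Lemma big_primesM (V : nmodType) (G : nat -> nat -> V) m k :
  (0 < m)%N -> (0 < k)%N -> coprime m k ->
  \sum_(p <- primes (m * k)) G p (logn p (m * k)) =
  \sum_(p <- primes m) G p (logn p m) + \sum_(p <- primes k) G p (logn p k).
Proof.
move=> m0 k0 cmk.
have primes_cat : perm_eq (primes (m * k)) (primes m ++ primes k).
  apply: uniq_perm => [||p]; rewrite ?primes_uniq ?mem_cat ?primesM //.
  by rewrite cat_uniq !primes_uniq andbT -coprime_has_primes.
rewrite (perm_big _ primes_cat) big_cat /=; congr (_ + _); apply: eq_big_seq => p pP.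
  by rewrite lognM_coprime.
by rewrite mulnC lognM_coprime // coprime_sym.
Qed.

Section CoprimeLeibniz.
Variable C : fieldType.
Implicit Types (u v f g A B : nat -> C) (m k n : nat).

Definition coprime_leibniz B A := forall m k, (0 < m)%N -> (0 < k)%N ->
  coprime m k -> A (m * k)%N = A m * B k + B m * A k.

Lemma dconv1 u v : dconv u v 1 = u 1%N * v 1%N.
Proof. by rewrite /dconv big_seq1. Qed.

Lemma dconvC u v n : (0 < n)%N -> dconv u v n = dconv v u n.
Proof.
move=> n0; rewrite /dconv (perm_big _ (perm_divisors_div n0)) big_map.
apply: eq_big_seq => d dn; have dvd_dn : (d %| n)%N by rewrite dvdn_divisors.
by rewrite divnA // mulKn // mulrC.
Qed.

Lemma dconv_coprimeM u v m k : (0 < m)%N -> (0 < k)%N -> coprime m k ->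
  dconv u v (m * k) = \sum_(d1 <- divisors m) \sum_(d2 <- divisors k)
     u (d1 * d2)%N * v (m %/ d1 * (k %/ d2))%N.
Proof.
move=> m0 k0 cmk; rewrite /dconv (perm_big _ (perm_divisorsM m0 k0 cmk)).
rewrite big_allpairs_dep /=; apply: eq_big_seq => d1 d1m; apply: eq_big_seq => d2 d2k.
move: (d1m) (d2k); rewrite -!dvdn_divisors // => /divnK {1}<- /divnK {1}<-.
by rewrite mulnACA mulnK // muln_gt0 (divisors_gt0 m0) ?(divisors_gt0 k0).
Qed.

Section ConvolutionByMultiplicative.
Variable f : nat -> C.
Hypothesis f_mul : arith_multiplicative f.

Lemma dconv_coprimeE u m k : (0 < m)%N -> (0 < k)%N -> coprime m k ->
  dconv f u (m * k) = \sum_(d1 <- divisors m) \sum_(d2 <- divisors k)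
     f d1 * f d2 * u (m %/ d1 * (k %/ d2))%N.
Proof.
move=> m0 k0 cmk; rewrite dconv_coprimeM //; apply: eq_big_seq => d1 d1m.
apply: eq_big_seq => d2 d2k.
by rewrite f_mul ?(divisors_gt0 m0 d1m) ?(divisors_gt0 k0 d2k)
  ?(coprime_divisors m0 k0 cmk).
Qed.

Lemma dconv_multiplicative v :
  arith_multiplicative v -> arith_multiplicative (dconv f v).
Proof.
move=> v_mul m k m0 k0 cmk; rewrite dconv_coprimeE // /dconv big_distrl.
apply: eq_big_seq => d1 d1m; rewrite big_distrr; apply: eq_big_seq => d2 d2k /=.
by rewrite v_mul ?(divn_divisors_gt0 m0 d1m) ?(divn_divisors_gt0 k0 d2k)
  ?(coprime_divisors_div m0 k0 cmk) // mulrACA.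
Qed.

Lemma dconv_coprime_leibniz B A :
  coprime_leibniz B A -> coprime_leibniz (dconv f B) (dconv f A).
Proof.
move=> AB m k m0 k0 cmk; rewrite dconv_coprimeE // /dconv !big_distrlr -big_split.
apply: eq_big_seq => d1 d1m; rewrite /= -big_split; apply: eq_big_seq => d2 d2k /=.
rewrite AB ?(divn_divisors_gt0 m0 d1m) ?(divn_divisors_gt0 k0 d2k)
  ?(coprime_divisors_div m0 k0 cmk) //; ring.
Qed.

End ConvolutionByMultiplicative.

Lemma Phi_coprime_leibniz g : coprime_leibniz (@Idf C) (Phi g).
Proof.
move=> m k m0 k0 cmk; rewrite /Phi /Idf.
rewrite (big_primesM (fun p a => g (p ^ a)%N / (p ^ a)%:R)) //.
by rewrite natrM mulrDr !mulrA mulrAC.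
Qed.

Lemma Phi1 g : Phi g 1 = 0.
Proof. by rewrite /Phi big_nil mulr0. Qed.

Lemma coprime_leibniz_primes B A n :
  arith_multiplicative B -> coprime_leibniz B A -> A 1%N = 0 -> (0 < n)%N ->
  (forall p, p \in primes n -> B (p ^ logn p n)%N != 0) ->
  A n = B n * \sum_(p <- primes n) A (p ^ logn p n)%N / B (p ^ logn p n)%N.
Proof.
move=> B_mul AB A1; elim/ltn_ind: n => n IHn n0 Bn_neq0.
have [n_gt1 | ] := ltnP 1 n; last first.
  by rewrite leq_eqVlt ltnS leqNgt n0 orbF => /eqP->; rewrite A1 big_nil mulr0.
have p_pr := pdiv_prime n_gt1; set p := pdiv n in p_pr *.
have [m cpm def_n] := pfactor_coprime p_pr n0; set a := logn p n in def_n.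
have m0 : (0 < m)%N by move: n0; rewrite def_n muln_gt0 => /andP[].
have a0 : (0 < a)%N by rewrite logn_gt0 mem_primes p_pr n0 pdiv_dvd.
have pa0 : (0 < p ^ a)%N by rewrite expn_gt0 prime_gt0.
have cm_pa : coprime m (p ^ a) by rewrite coprime_sym coprimeXl.
have Bpa_neq0 : B (p ^ a)%N != 0.
  by apply: Bn_neq0; rewrite mem_primes p_pr n0 pdiv_dvd.
have IHm :
    A m = B m * \sum_(q <- primes m) A (q ^ logn q m)%N / B (q ^ logn q m)%N.
  apply: IHn => [|//| q qm].
    by rewrite def_n ltn_Pmulr // -{1}(expn0 p) ltn_exp2l ?prime_gt1.
  by rewrite -(lognM_coprime m0 pa0 cm_pa qm) -def_n Bn_neq0 // def_n primesM // qm.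
rewrite def_n AB // B_mul // IHm.
rewrite (big_primesM (fun q e => A (q ^ e)%N / B (q ^ e)%N)) //.
rewrite primesX // (primes_prime p_pr).
rewrite big_seq1 pfactorK // mulrDr mulrAC; congr (_ + _).
by rewrite -mulrA [B (p ^ a)%N * _]mulrC divfK.
Qed.

End CoprimeLeibniz.

Theorem corollary2p1 (R : realType) (f g : nat -> R[i]) (n : nat) :
  arith_multiplicative f -> (0 < n)%N ->
  (forall p : nat, p \in primes n -> dconv (@Idf _) f (p ^ logn p n)%N != 0) ->
  dconv f (Phi g) n =
    dconv (@Idf _) f n *
    \sum_(p <- primes n)
       dconv f (Phi g) (p ^ logn p n)%N / dconv (@Idf _) f (p ^ logn p n)%N.
Proof.
move=> f_mul n0 Bn_neq0.
have Id_mul : arith_multiplicative (@Idf R[i]) by move=> m k _ _ _; rewrite /Idf natrM.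
have IdfC p : p \in primes n ->
    dconv (@Idf _) f (p ^ logn p n)%N = dconv f (@Idf _) (p ^ logn p n)%N.
  by rewrite mem_primes => /and3P[p_pr _ _]; rewrite dconvC // expn_gt0 prime_gt0.
rewrite [dconv _ f n]dconvC //; under eq_big_seq => p pn do rewrite IdfC //.
apply: coprime_leibniz_primes => // [|||p pn]; last by rewrite -IdfC ?Bn_neq0.
- exact: dconv_multiplicative.
- exact/dconv_coprime_leibniz/Phi_coprime_leibniz.
- by rewrite dconv1 Phi1 mulr0.
Qed.
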